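(* Let $\mathbf{A}$ be a 3-dimensional cyclic Leibniz algebra over $\mathbb{C}$. Then $\mathbf{A}$ is isomorphic to a Leibniz algebra with basis $\{a,a^2,a^3\}$, where $aa=a^2$, $aa^2=a^3$, $a^2v=a^3v=0$ for all $v$, and $aa^3$ is given by one and only one of the following: (1) $aa^3=0$; (2) $aa^3=a^3$; (3) $aa^3=a^2+\alpha_3a^3$ with $\alpha_3\in\mathbb{C}/\sim$, where $\alpha\sim\alpha'$ iff $\alpha'=\pm\alpha$. Here ''one and only one'' means that algebras from different cases are non-isomorphic, and in case (3) the algebras with parameters $\alpha_3,\alpha_3'$ are isomorphic iff $\alpha_3'=\pm\alpha_3$.
   Context: A (left) Leibniz algebra is a vector space with a bilinear product such that $x(yz)=(xy)z+y(xz)$ for all $x,y,z$. A cyclic Leibniz algebra is a Leibniz algebra generated by a single element. For an element $x$ set $x^1=x$ and $x^{j+1}=x\,x^j$. *)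

From HB Require Import structures.
From mathcomp Require Import all_boot all_order all_algebra.
From mathcomp Require Import complex.
From mathcomp Require Import reals.
Set Implicit Arguments. Unset Strict Implicit. Unset Printing Implicit Defensive.
Import Order.TTheory GRing.Theory Num.Theory.
Local Open Scope ring_scope.

Definition bilinear_prod (K : fieldType) (V : lmodType K) (m : V -> V -> V) :=
  (forall (a : K) x y z, m (a *: x + y) z = a *: m x z + m y z) /\
  (forall (a : K) x y z, m z (a *: x + y) = a *: m z x + m z y).

Definition leibniz_identity (K : fieldType) (V : lmodType K) (m : V -> V -> V) :=
  forall x y z, m x (m y z) = m (m x y) z + m y (m x z).

Definition cyclic_alg (K : fieldType) (V : vectType K) (m : V -> V -> V) :=
  exists x : V, forall U : {vspace V},
    x \in U -> (forall u v, u \in U -> v \in U -> m u v \in U) -> U = fullv.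

Definition alg_iso (K : fieldType) (V W : lmodType K)
    (mV : V -> V -> V) (mW : W -> W -> W) :=
  exists f : V -> W,
    [/\ forall (a : K) x y, f (a *: x + y) = a *: f x + f y,
        bijective f &
        forall x y, f (mV x y) = mW (f x) (f y)].

Definition i0 : 'I_3 := @Ordinal 3 0 isT.
Definition i1 : 'I_3 := @Ordinal 3 1 isT.
Definition i2 : 'I_3 := @Ordinal 3 2 isT.

(* Model algebra on K^3 with basis a = e_0, a^2 = e_1, a^3 = e_2:
   a a = a^2, a a^2 = a^3, a a^3 = p a^2 + q a^3, a^2 v = a^3 v = 0.
   For u = u0 a + u1 a^2 + u2 a^3 and v likewise,
   u v = u0 (v0 a^2 + v1 a^3 + v2 (p a^2 + q a^3)). *)
Definition model_mul (K : fieldType) (p q : K) (u v : 'rV[K]_3) : 'rV[K]_3 :=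
  \row_(i < 3)
     (if i == i1 then u 0 i0 * (v 0 i0 + p * v 0 i2)
      else if i == i2 then u 0 i0 * (v 0 i1 + q * v 0 i2)
      else 0).

(* By the Leibniz identity, every square [x x] is a left annihilator, and so is
   every product [x w] with [w] a left annihilator. Let [a] generate the algebra.
   The subspaces [<a>] and [<a, a^2>] would be subalgebras if they contained [a^2],
   resp. [a^3], so [a, a^2, a^3] is a basis, and the product is determined by
   [a a^3 = al2 a^2 + al3 a^3]: there is no [a]-term since [(a a^3) a = 0] while
   [a a <> 0]. Replacing [a] by [s a] turns [(al2, al3)] into [(s^2 al2, s al3)];
   conversely an isomorphism between two models sends the generator to an element
   with nonzero first coordinate [c] and forces [(al2, al3) = (c^2 al2', c al3')].
   Hence the orbit representatives [(0, 0)], [(0, 1)] and [(1, al3)], with [al3]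
   determined up to sign. *)

From HB Require Import structures.
From mathcomp Require Import all_boot all_order all_algebra.
From mathcomp Require Import complex.
From mathcomp Require Import reals.
From mathcomp Require Import ring.
Set Implicit Arguments. Unset Strict Implicit. Unset Printing Implicit Defensive.
Import Order.TTheory GRing.Theory Num.Theory.
Local Open Scope ring_scope.

Lemma linear_fun0 (K : fieldType) (U W : lmodType K) (f : U -> W) :
  linear f -> f 0 = 0.
Proof. by move=> f_lin; have := f_lin (-1) 0 0; rewrite !scaleN1r oppr0 addr0 addNr. Qed.

Lemma linear_funZ (K : fieldType) (U W : lmodType K) (f : U -> W) :
  linear f -> forall a x, f (a *: x) = a *: f x.
Proof. by move=> f_lin a x; rewrite -[a *: x]addr0 f_lin linear_fun0 // addr0. Qed.

Lemma linear_funD (K : fieldType) (U W : lmodType K) (f : U -> W) :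
  linear f -> {morph f : x y / x + y}.
Proof. by move=> f_lin x y; rewrite -[x in LHS]scale1r f_lin scale1r. Qed.

Lemma alg_iso_trans (K : fieldType) (U V W : lmodType K)
    (mU : U -> U -> U) (mV : V -> V -> V) (mW : W -> W -> W) :
  alg_iso mU mV -> alg_iso mV mW -> alg_iso mU mW.
Proof.
move=> [f [f_lin f_bij f_mul]] [g [g_lin g_bij g_mul]].
exists (g \o f); split=> [a x y | | x y] /=.
- by rewrite f_lin g_lin.
- exact: bij_comp.
- by rewrite f_mul g_mul.
Qed.

Section Model.
Variable K : fieldType.

Definition row3 (a b c : K) : 'rV[K]_3 :=
  \row_(j < 3) (if j == i0 then a else if j == i1 then b else c).

Lemma row3E0 a b c : row3 a b c 0 i0 = a. Proof. by rewrite !mxE. Qed.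
Lemma row3E1 a b c : row3 a b c 0 i1 = b. Proof. by rewrite !mxE. Qed.
Lemma row3E2 a b c : row3 a b c 0 i2 = c. Proof. by rewrite !mxE. Qed.
Definition row3E := (row3E0, row3E1, row3E2).

Lemma row3_eq0 a b c : (row3 a b c == 0) = [&& a == 0, b == 0 & c == 0].
Proof.
apply/eqP/and3P=> [r0 | [/eqP-> /eqP-> /eqP->]].
  by move: (row3E0 a b c) (row3E1 a b c) (row3E2 a b c); rewrite r0 !mxE => <- <- <-.
by apply/rowP=> j; rewrite !mxE; case: ifP => //; case: ifP.
Qed.

Lemma row3_coord (u : 'rV[K]_3) : u = row3 (u 0 i0) (u 0 i1) (u 0 i2).
Proof.
by apply/rowP=> -[[|[|[|j]]] lt_j3]; rewrite !mxE //=; congr (u 0 _); apply: val_inj.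
Qed.

Lemma row3D a b c a' b' c' :
  row3 a b c + row3 a' b' c' = row3 (a + a') (b + b') (c + c').
Proof. by apply/rowP=> j; rewrite !mxE; case: ifP => //; case: ifP. Qed.

Lemma row3Z k a b c : k *: row3 a b c = row3 (k * a) (k * b) (k * c).
Proof. by apply/rowP=> j; rewrite !mxE; case: ifP => //; case: ifP. Qed.

Lemma model_mulE p q u v : model_mul p q u v =
  row3 0 (u 0 i0 * (v 0 i0 + p * v 0 i2)) (u 0 i0 * (v 0 i1 + q * v 0 i2)).
Proof. by apply/rowP=> -[[|[|[|j]]] lt_j3]; rewrite !mxE. Qed.

Lemma model_mul_twice p q (g w : 'rV[K]_3) : w 0 i0 = 0 ->
  model_mul p q g (model_mul p q g w) =
    (g 0 i0 ^+ 2 * p) *: w + (g 0 i0 * q) *: model_mul p q g w.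
Proof.
move=> w0; rewrite !model_mulE !row3E [w in RHS]row3_coord !row3Z row3D !row3E w0.
by congr row3; ring.
Qed.

Lemma model_scale_iso (s p q : K) : s != 0 ->
  alg_iso (model_mul (s ^+ 2 * p) (s * q)) (model_mul p q).
Proof.
move=> s_neq0.
pose dil t (u : 'rV[K]_3) := row3 (t * u 0 i0) (t ^+ 2 * u 0 i1) (t ^+ 3 * u 0 i2).
have dilK t : t != 0 -> cancel (dil t) (dil t^-1).
  by move=> t_neq0 u; rewrite [RHS]row3_coord /dil !row3E; congr row3; field.
exists (dil s); split=> [a x y | | x y].
- by rewrite /dil !mxE row3Z row3D; congr row3; ring.
- exists (dil s^-1); first exact: dilK.
  by rewrite -{2}(invrK s); apply: dilK; rewrite invr_eq0.
- by rewrite /dil !model_mulE !row3E; congr row3; ring.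
Qed.

Section ModelIso.
Variables (p q p' q' : K) (f : 'rV[K]_3 -> 'rV[K]_3).
Hypotheses (f_lin : linear f) (f_inj : injective f).
Hypothesis f_mul : forall x y, f (model_mul p q x y) = model_mul p' q' (f x) (f y).
Local Notation e0 := (row3 1 0 0).
Local Notation e1 := (row3 0 1 0).
Local Notation e2 := (row3 0 0 1).
Local Notation c := (f e0 0 i0).

(* The model is generated by [e0]: every row is [u0 e0] plus a product [e0 w]. *)
Lemma model_iso_coord0 u : f u 0 i0 = u 0 i0 * c.
Proof.
have uE : u = u 0 i0 *: e0 + model_mul p q e0 (row3 (u 0 i1) (u 0 i2) 0).
  by rewrite {1}[u]row3_coord model_mulE !row3E row3Z row3D; congr row3; ring.
rewrite [in LHS]uE linear_funD // linear_funZ // f_mul mxE model_mulE row3E.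
by rewrite mxE addr0.
Qed.

Lemma model_iso_params_of : p = c ^+ 2 * p' /\ q = c * q'.
Proof.
have e00 : model_mul p q e0 e0 = e1 by rewrite model_mulE !row3E; congr row3; ring.
have e01 : model_mul p q e0 e1 = e2 by rewrite model_mulE !row3E; congr row3; ring.
have e02 : model_mul p q e0 e2 = p *: e1 + q *: e2.
  by rewrite model_mulE !row3E !row3Z row3D; congr row3; ring.
have fe2 : f e2 = model_mul p' q' (f e0) (f e1) by rewrite -e01 f_mul.
have fe1_0 : f e1 0 i0 = 0 by rewrite -e00 f_mul model_mulE row3E.
have : f ((c ^+ 2 * p' - p) *: e1 + (c * q' - q) *: e2) = f 0.
  have := f_mul e0 e2; rewrite e02 [in RHS]fe2 model_mul_twice // -fe2.
  rewrite !(linear_funD f_lin) !(linear_funZ f_lin) (linear_fun0 f_lin) => E.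
  by rewrite !scalerBl addrACA -opprD E subrr.
move/f_inj/eqP; rewrite !row3Z row3D row3_eq0 !mulr0 !mulr1 !addr0 !add0r !subr_eq0.
by case/and3P=> _ /eqP-> /eqP->.
Qed.

End ModelIso.

Lemma model_iso_params p q p' q' :
  alg_iso (model_mul p q) (model_mul p' q') ->
  exists2 c : K, c != 0 & p = c ^+ 2 * p' /\ q = c * q'.
Proof.
move=> [f [f_lin f_bij f_mul]]; have f_inj := bij_inj f_bij.
exists (f (row3 1 0 0) 0 i0); last exact: model_iso_params_of.
have [h _ hK] := f_bij; apply/eqP=> c0.
have := congr1 (fun u : 'rV_3 => u 0 i0) (hK (row3 1 0 0)).
by rewrite /= (model_iso_coord0 f_lin f_mul) c0 mulr0 row3E => /eqP; rewrite eq_sym oner_eq0.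
Qed.

End Model.

Section LeibnizAlgebra.
Variables (K : fieldType) (V : lmodType K) (m : V -> V -> V).
Hypotheses (m_bilin : bilinear_prod m) (m_leib : leibniz_identity m).

Lemma prod_linl z : linear (m^~ z). Proof. by move=> a x y; apply: m_bilin.1. Qed.
Lemma prod_linr z : linear (m z). Proof. by move=> a x y; apply: m_bilin.2. Qed.

Lemma prodZl a x z : m (a *: x) z = a *: m x z.
Proof. exact: (linear_funZ (prod_linl z) a x). Qed.
Lemma prodZr a x z : m z (a *: x) = a *: m z x.
Proof. exact: (linear_funZ (prod_linr z) a x). Qed.
Lemma prodDl x y z : m (x + y) z = m x z + m y z.
Proof. exact: (linear_funD (prod_linl z) x y). Qed.
Lemma prodDr x y z : m z (x + y) = m z x + m z y.
Proof. exact: (linear_funD (prod_linr z) x y). Qed.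
Lemma prod0l z : m 0 z = 0. Proof. exact: linear_fun0 (prod_linl z). Qed.
Lemma prod0r z : m z 0 = 0. Proof. exact: linear_fun0 (prod_linr z). Qed.

Definition left_annihilator (w : V) := forall z, m w z = 0.

Lemma left_annihilator_sq x : left_annihilator (m x x).
Proof. by move=> z; apply: (@addIr _ (m x (m x z))); rewrite add0r -m_leib. Qed.

Lemma left_annihilator_prodr x w :
  left_annihilator w -> left_annihilator (m x w).
Proof. by move=> w_ann z; have := m_leib x w z; rewrite !w_ann prod0r addr0. Qed.

Lemma prod_powers_combl x c1 c2 c3 w :
  m (c1 *: x + c2 *: m x x + c3 *: m x (m x x)) w = c1 *: m x w.
Proof.
have x2_ann := left_annihilator_sq x.
have x3_ann := left_annihilator_prodr x x2_ann.
by rewrite !prodDl !prodZl x2_ann x3_ann !scaler0 !addr0.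
Qed.

End LeibnizAlgebra.

Lemma memv_span2P (K : fieldType) (V : vectType K) (v y z : V) :
  v \in <<[:: y; z]>>%VS -> exists k l, v = k *: y + l *: z.
Proof.
rewrite span_cons span_seq1 => /memv_addP[_ /vlineP[k ->] [_ /vlineP[l ->] ->]].
by exists k, l.
Qed.

Lemma memv_span3P (K : fieldType) (V : vectType K) (v x y z : V) :
  v \in <<[:: x; y; z]>>%VS -> exists k l n, v = k *: x + l *: y + n *: z.
Proof.
rewrite span_cons => /memv_addP[_ /vlineP[k ->] [_ /memv_span2P[l [n ->]] ->]].
by exists k, l, n; rewrite addrA.
Qed.

Section CyclicLeibnizAlgebra.
Variables (K : fieldType) (V : vectType K) (m : V -> V -> V).
Hypotheses (m_bilin : bilinear_prod m) (m_leib : leibniz_identity m).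
Hypothesis dimV : \dim (fullv : {vspace V}) = 3%N.
Variable a : V.
Local Notation a2 := (m a a).
Local Notation a3 := (m a a2).

Lemma powers_iso p q : <<[:: a; a2; a3]>>%VS = fullv ->
  m a a3 = p *: a2 + q *: a3 -> alg_iso m (model_mul p q).
Proof.
move=> span_powers a4E.
pose X : 3.-tuple V := [tuple a; a2; a3].
have freeX : free X by rewrite /free /= span_powers dimV.
pose f (v : V) : 'rV[K]_3 := \row_(i < 3) coord X i v.
pose g (u : 'rV[K]_3) : V := \sum_(i < 3) u 0 i *: X`_i.
have gK : cancel g f by move=> u; apply/rowP=> j; rewrite mxE coord_sum_free.
have fK : cancel f g.
  move=> v; rewrite [RHS](coord_span (X := X) (v := v)) ?span_powers ?memvf //.
  by apply: eq_bigr => i _; rewrite mxE.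
have gE u : g u = u 0 i0 *: a + u 0 i1 *: a2 + u 0 i2 *: a3.
  rewrite /g !big_ord_recl big_ord0 addr0 addrA.
  by congr (_ *: _ + _ *: _ + _ *: _); congr (u 0 _); apply: val_inj.
have g_mul u v : m (g u) (g v) = g (model_mul p q u v).
  rewrite !gE (prod_powers_combl m_bilin m_leib) !(prodDr m_bilin) !(prodZr m_bilin) a4E.
  rewrite model_mulE !row3E scale0r add0r !scalerDr !scalerA addrACA -!scalerDl.
  by congr (_ *: _ + _ *: _); ring.
exists f; split=> [c u v | | u v].
- by apply/rowP=> i; rewrite !mxE linearP.
- by exists g.
- by rewrite -{1}(fK u) -{1}(fK v) g_mul gK.
Qed.

Hypothesis a_gen : forall U : {vspace V},
  a \in U -> (forall u v, u \in U -> v \in U -> m u v \in U) -> U = fullv.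

Lemma sq_notin_line : a2 \notin <[a]>%VS.
Proof.
apply/negP=> a2_line.
have line_full : <[a]>%VS = fullv.
  apply: a_gen; first exact: memv_line.
  move=> _ _ /vlineP[k ->] /vlineP[l ->].
  by rewrite (prodZl m_bilin) (prodZr m_bilin); do 2 apply: memvZ.
by have := dim_vline a; rewrite line_full dimV; case: (a != 0).
Qed.

Lemma cube_notin_span : a3 \notin <<[:: a2; a]>>%VS.
Proof.
apply/negP=> a3_span.
have span_full : <<[:: a2; a]>>%VS = fullv.
  apply: a_gen; first by apply: memv_span; rewrite !inE eqxx orbT.
  move=> _ _ /memv_span2P[k [l ->]] /memv_span2P[k' [l' ->]].
  rewrite (prodDl m_bilin) !(prodZl m_bilin) (left_annihilator_sq m_leib).
  rewrite scaler0 add0r (prodDr m_bilin) !(prodZr m_bilin).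
  apply/memvZ/memvD; apply: memvZ => //.
  by apply: memv_span; rewrite !inE eqxx.
by have := dim_span [:: a2; a]; rewrite span_full dimV.
Qed.

Lemma span_powers : <<[:: a; a2; a3]>>%VS = fullv.
Proof.
have a_neq0 : a != 0.
  by apply: contraNneq sq_notin_line => ->; rewrite (prod0l m_bilin) mem0v.
have free_powers : free [:: a3; a2; a].
  by rewrite free_cons cube_notin_span free_cons span_seq1 sq_notin_line seq1_free.
have perm_powers : perm_eq [:: a3; a2; a] [:: a; a2; a3].
  by rewrite (perm_rev [:: a; a2; a3]).
rewrite (perm_free perm_powers) in free_powers.
by apply/eqP; rewrite eqEdim subvf dimV (eqP free_powers).
Qed.

Lemma fourth_power_decomp : exists p q, m a a3 = p *: a2 + q *: a3.
Proof.
have a2_neq0 : a2 != 0 by apply: contraNneq sq_notin_line => ->; rewrite mem0v.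
have [k [p [q a4E]]] : exists k p q, m a a3 = k *: a + p *: a2 + q *: a3.
  by apply: memv_span3P; rewrite span_powers memvf.
exists p, q; suff k0 : k = 0 by rewrite a4E k0 scale0r add0r.
have ann_prod := left_annihilator_prodr m_bilin m_leib a.
have a4_ann := ann_prod _ (ann_prod _ (left_annihilator_sq m_leib a)).
have := a4_ann a; rewrite a4E (prod_powers_combl m_bilin m_leib) => /eqP.
by rewrite scaler_eq0 (negbTE a2_neq0) orbF => /eqP.
Qed.

End CyclicLeibnizAlgebra.

Section ModelClassification.
Variable K : fieldType.

Lemma model00_not_iso_model01 : ~ alg_iso (model_mul 0 0) (model_mul (0 : K) 1).
Proof.
move/model_iso_params=> [c c_neq0 [_ /esym/eqP]].
by rewrite mulr1 (negbTE c_neq0).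
Qed.

Lemma model0_not_iso_model1 (q al : K) : ~ alg_iso (model_mul 0 q) (model_mul 1 al).
Proof.
move/model_iso_params=> [c c_neq0 [/esym/eqP]].
by rewrite mulr1 expf_eq0 (negbTE c_neq0) andbF.
Qed.

Lemma model1_isoE (al al' : K) :
  alg_iso (model_mul 1 al) (model_mul 1 al') <-> al' = al \/ al' = - al.
Proof.
split=> [/model_iso_params[c _ [/esym/eqP]] | [] ->].
- rewrite mulr1 sqrf_eq1 => /orP[] /eqP-> ->; first by left; rewrite mul1r.
  by right; rewrite mulN1r opprK.
- by exists id; split=> //; exists id.
- have N1_neq0 : (-1 : K) != 0 by rewrite oppr_eq0 oner_eq0.
  by have := model_scale_iso 1 (- al) N1_neq0; rewrite sqrrN expr1n mulr1 mulN1r opprK.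
Qed.

End ModelClassification.

Theorem corollary4p1 (R : realType) (V : vectType R[i]) (m : V -> V -> V) :
  bilinear_prod m -> leibniz_identity m ->
  \dim (fullv : {vspace V}) = 3%N -> cyclic_alg m ->
  (* existence: A is isomorphic to one of the models *)
  [/\ alg_iso m (model_mul 0 0) \/ alg_iso m (model_mul 0 1) \/
        (exists al : R[i], alg_iso m (model_mul 1 al)),
  (* uniqueness: algebras from different cases are non-isomorphic *)
      ~ alg_iso (model_mul 0 0) (model_mul (0 : R[i]) 1),
      (forall al : R[i], ~ alg_iso (model_mul 0 0) (model_mul 1 al)),
      (forall al : R[i], ~ alg_iso (model_mul 0 1) (model_mul 1 al)) &
  (* case (3): parameters al, al' give isomorphic algebras iff al' = +- al *)
      forall al al' : R[i],
        alg_iso (model_mul 1 al) (model_mul 1 al') <-> (al' = al \/ al' = - al)].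
Proof.
move=> m_bilin m_leib dimV [a a_gen].
split; [| exact: model00_not_iso_model01 | exact: model0_not_iso_model1
        | exact: model0_not_iso_model1 | exact: model1_isoE].
have [al2 [al3 a4E]] := fourth_power_decomp m_bilin m_leib dimV a_gen.
have iso := powers_iso m_bilin m_leib dimV (span_powers m_bilin m_leib dimV a_gen) a4E.
move: iso; have [-> | al2_neq0] := eqVneq al2 0 => iso.
  move: iso; have [-> | al3_neq0] := eqVneq al3 0 => iso; first by left.
  right; left; apply: alg_iso_trans iso _.
  by have := model_scale_iso 0 1 al3_neq0; rewrite mulr0 mulr1.
pose s := sqrtC al2; have s_neq0 : s != 0 by rewrite sqrtC_eq0.
right; right; exists (al3 / s); apply: alg_iso_trans iso _.
by have := model_scale_iso 1 (al3 / s) s_neq0; rewrite sqrtCK mulr1 mulrCA mulfV // mulr1.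
Qed.
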